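(* Let $\mathcal{A}\subset\mathbb{P}^2\mathbb{C}$ be a line arrangement with $|\mathcal{A}|=12$ all of whose intersection points have multiplicity at most $5$. Suppose the system $\mathbf{S}$ over $\mathbb{F}_2$ admits a non-constant solution. Then each line of $\mathcal{A}$ contains exactly $3$ quadruple points.
   Context: For a prime $p$, the system $\mathbf{S}$ over $\mathbb{F}_p$ is the linear system in unknowns $(\eta_H)_{H\in\mathcal{A}}$, one unknown for each line, with one set of conditions for each intersection point $X$ of $\mathcal{A}$. Let $m_X$ be the number of lines through $X$. If $p\mid m_X$, the condition is $\sum_{H\ni X}\eta_H=0$. If $p\nmid m_X$, the condition is $\eta_H=\eta_K$ for all lines $H,K$ through $X$. A solution is non-constant if not all $\eta_H$ are equal. A quadruple point is a point lying on exactly $4$ lines of $\mathcal{A}$. *)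

(* Lines / points of P^2(C) via homogeneous coordinates in algC^3. *)
From HB Require Import structures.
From mathcomp Require Import all_boot all_order all_algebra all_field.
Set Implicit Arguments. Unset Strict Implicit. Unset Printing Implicit Defensive.
Import GRing.Theory Num.Theory.
Local Open Scope ring_scope.

Definition incident (l v : 'rV[algC]_3) : bool := \sum_(k < 3) l 0 k * v 0 k == 0.

Definition line_arrangement (n : nat) (L : 'I_n -> 'rV[algC]_3) : Prop :=
  (forall i, L i != 0) /\ (forall i j (c : algC), L i = c *: L j -> i = j).

Definition lines_through (n : nat) (L : 'I_n -> 'rV[algC]_3) (v : 'rV[algC]_3) : {set 'I_n} :=
  [set i | incident (L i) v].
Definition mult (n : nat) (L : 'I_n -> 'rV[algC]_3) (v : 'rV[algC]_3) : nat :=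
  #|lines_through L v|.

Definition intersection_point (n : nat) (L : 'I_n -> 'rV[algC]_3) (v : 'rV[algC]_3) : bool :=
  (v != 0) && (2 <= mult L v)%N.

(* canonical representative of a projective point: first nonzero coordinate is 1 *)
Definition normalized (v : 'rV[algC]_3) : bool :=
  [exists k : 'I_3, (v 0 k == 1) && [forall j : 'I_3, (j < k)%N ==> (v 0 j == 0)]].

Definition solves_S (p n : nat) (L : 'I_n -> 'rV[algC]_3) (eta : 'I_n -> 'F_p) : Prop :=
  forall v, intersection_point L v ->
    if (p %| mult L v)%N then \sum_(i in lines_through L v) eta i = 0
    else forall h k, h \in lines_through L v -> k \in lines_through L v -> eta h = eta k.

Definition nonconstant (p n : nat) (eta : 'I_n -> 'F_p) : Prop :=
  exists h k, eta h <> eta k.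

(* Colour the lines by A = {eta = 0} and its complement B.  At the meet X of
   a line of A and a line of B the conditions of S cannot be "all equal", so
   2 | m_X and X carries an even number of B-lines; with m_X <= 5 this leaves
   exactly 2 lines of each colour ("A is balanced").  Fix h in A.  Each
   mixed point on h holds two lines of B and one further line of A, its
   "partner"; double counting the pairs (partner, B-line) gives
   |B| = 2 * #partners(h) < 2 |A|, and symmetrically |A| < 2 |B|.  For
   |A| + |B| = 12 this forces |A| = |B| = 6 and three partners.  The
   quadruple points on h are then exactly the three meets with partners: a
   quadruple point on h with no B-line would need three more A-lines besides
   the partners, which do not fit among the five A-lines other than h. *)

From HB Require Import structures.
From mathcomp Require Import all_boot all_order all_algebra all_field.
From mathcomp Require Import ring zify.
Set Implicit Arguments. Unset Strict Implicit. Unset Printing Implicit Defensive.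
Import GRing.Theory Num.Theory.
Local Open Scope ring_scope.

Section Coordinates.
Variable F : fieldType.
Implicit Types l m v w c : 'rV[F]_3.

Definition o0 : 'I_3 := @Ordinal 3 0 isT.
Definition o1 : 'I_3 := @Ordinal 3 1 isT.
Definition o2 : 'I_3 := @Ordinal 3 2 isT.

Lemma ord3P (P : 'I_3 -> Prop) : P o0 -> P o1 -> P o2 -> forall k, P k.
Proof.
move=> P0 P1 P2 [[|[|[|//]]] lt3].
- by rewrite (_ : Ordinal lt3 = o0) //; apply: val_inj.
- by rewrite (_ : Ordinal lt3 = o1) //; apply: val_inj.
- by rewrite (_ : Ordinal lt3 = o2) //; apply: val_inj.
Qed.

Lemma row3P v w :
  v 0 o0 = w 0 o0 -> v 0 o1 = w 0 o1 -> v 0 o2 = w 0 o2 -> v = w.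
Proof. by move=> *; apply/rowP; apply: ord3P. Qed.

Definition dot3 l v : F := l 0 o0 * v 0 o0 + l 0 o1 * v 0 o1 + l 0 o2 * v 0 o2.

Definition cross l m : 'rV[F]_3 :=
  \row_k (if k == o0 then l 0 o1 * m 0 o2 - l 0 o2 * m 0 o1
          else if k == o1 then l 0 o2 * m 0 o0 - l 0 o0 * m 0 o2
          else l 0 o0 * m 0 o1 - l 0 o1 * m 0 o0).

Lemma dot3_cross l m : dot3 l (cross l m) = 0 /\ dot3 m (cross l m) = 0.
Proof. by rewrite /dot3 !mxE /=; split; ring. Qed.

Lemma cross_cross v l m : cross v (cross l m) = dot3 m v *: l - dot3 l v *: m.
Proof. by apply: row3P; rewrite /dot3 !mxE /=; ring. Qed.

Lemma cross_eq0_mul v c : cross v c = 0 -> forall j k, v 0 j * c 0 k = v 0 k * c 0 j.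
Proof.
move=> /rowP vc.
have e k : cross v c 0 k = 0 by rewrite vc mxE.
move: (e o0) (e o1) (e o2); rewrite !mxE /= => /eqP + /eqP + /eqP.
rewrite !subr_eq0 => /eqP e12 /eqP e20 /eqP e01.
by elim/ord3P => //; elim/ord3P => //; rewrite mulrC ?e12 ?e20 ?e01 // mulrC.
Qed.

Lemma cross_eq0_scale v c : cross v c = 0 -> c != 0 -> exists a, v = a *: c.
Proof.
move=> /cross_eq0_mul vc /rV0Pn[k ck].
exists (v 0 k / c 0 k); apply/rowP => j.
by rewrite mxE mulrAC -vc mulfK.
Qed.

End Coordinates.

Lemma normalizedP v : normalized v ->
  exists k, v 0 k = 1 /\ forall j : 'I_3, (j < k)%N -> v 0 j = 0.
Proof.
case/existsP=> k /andP[/eqP vk /forallP v0]; exists k; split=> // j jk.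
by apply/eqP; move: (v0 j); rewrite jk.
Qed.

Lemma normalized_neq0 v : normalized v -> v != 0.
Proof.
case/normalizedP=> k [vk _]; apply: contra_eq_neq vk => ->.
by rewrite mxE eq_sym oner_neq0.
Qed.

Lemma normalized_scale v w (c : algC) :
  normalized v -> normalized w -> v = c *: w -> v = w.
Proof.
move=> /normalizedP[i [vi vlt]] /normalizedP[j [wj wlt]] vcw.
have vE k : v 0 k = c * w 0 k by rewrite vcw mxE.
have [ij|ji|/val_inj ij] := ltngtP i j.
- by move: vi; rewrite vE wlt // mulr0 => /eqP; rewrite eq_sym oner_eq0.
- move: (vlt j ji); rewrite vE wj mulr1 => c0.
  by move: vi; rewrite vE c0 mul0r => /eqP; rewrite eq_sym oner_eq0.
- by move: vi; rewrite vE ij wj mulr1 => c1; rewrite vcw c1 scale1r.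
Qed.

(* Every nonzero vector has a normalized multiple: divide by its first
   nonzero coordinate. *)
Lemma normalize_exists v : v != 0 -> exists2 a : algC, a != 0 & normalized (a *: v).
Proof.
case/rV0Pn=> k0 vk0.
case: (@arg_minnP _ k0 (fun k => v 0 k != 0) val vk0) => k vk kmin.
exists (v 0 k)^-1; rewrite ?invr_eq0 //; apply/existsP; exists k.
rewrite mxE mulVf ?eqxx //=; apply/forallP => j; apply/implyP => jk.
have vj : v 0 j = 0 by apply/eqP; apply: contraTT jk => /kmin; rewrite leqNgt.
by rewrite mxE vj mulr0.
Qed.

Lemma incidentE l v : incident l v = (dot3 l v == 0).
Proof.
rewrite /incident /dot3 !big_ord_recl big_ord0 addr0 addrA.
have -> : (lift ord0 ord0 : 'I_3) = o1 by apply: val_inj.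
have -> : (lift ord0 (lift ord0 ord0) : 'I_3) = o2 by apply: val_inj.
by have -> : (ord0 : 'I_3) = o0 by apply: val_inj.
Qed.

Lemma incidentZ l v (a : algC) : a != 0 -> incident l (a *: v) = incident l v.
Proof.
move=> a_neq0; rewrite !incidentE.
have -> : dot3 l (a *: v) = a * dot3 l v by rewrite /dot3 !mxE; ring.
by rewrite mulf_eq0 (negPf a_neq0).
Qed.

(* A point on two lines is a multiple of the cross product of the lines,
   by cross_cross. *)
Lemma common_point_scale l m v : incident l v -> incident m v -> cross l m != 0 ->
  exists a, v = a *: cross l m.
Proof.
rewrite !incidentE => /eqP lv /eqP mv; apply: cross_eq0_scale.
by rewrite cross_cross lv mv !scale0r subr0.
Qed.

Lemma sum_bool_card (I : finType) (X : {set I}) (P : pred I) :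
  (\sum_(i in X) P i)%N = #|[set i in X | P i]|.
Proof. by rewrite -sum1dep_card big_mkcondr; apply: eq_bigr => i _; case: (P i). Qed.

Lemma double_count (I J : finType) (X : {set I}) (Y : {set J}) (R : I -> J -> bool) :
  (\sum_(i in X) #|[set j in Y | R i j]|)%N = (\sum_(j in Y) #|[set i in X | R i j]|)%N.
Proof.
under eq_bigr do rewrite -sum_bool_card.
under [RHS]eq_bigr do rewrite -sum_bool_card.
exact: exchange_big.
Qed.

Lemma F2_neq0 (x : 'F_2) : x != 0 -> x = 1.
Proof. by case: x => -[|[|//]] lt2 // _; apply: val_inj. Qed.

Lemma F2_sum (I : finType) (X : {set I}) (eta : I -> 'F_2) :
  \sum_(i in X) eta i = #|[set i in X | eta i != 0]|%:R.
Proof.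
rewrite -sum_bool_card natr_sum; apply: eq_bigr => i _.
by have [->|/F2_neq0->] := eqVneq (eta i) 0.
Qed.

Section Arrangement.
Variables (n : nat) (L : 'I_n -> 'rV[algC]_3).
Hypothesis hL : line_arrangement L.

Lemma cross_lines_neq0 i j : i != j -> cross (L i) (L j) != 0.
Proof.
case: hL => L_neq0 L_inj ij; apply: contra_neq ij => /cross_eq0_scale.
by case/(_ (L_neq0 j)) => a /L_inj.
Qed.

Lemma meet_exists i j : exists v,
  (cross (L i) (L j) != 0) ==> [&& normalized v, incident (L i) v & incident (L j) v].
Proof.
have [_|c_neq0] := eqVneq (cross (L i) (L j)) 0; first by exists 0.
have [a a_neq0 na] := normalize_exists c_neq0.
have [li lj] := dot3_cross (L i) (L j).
by exists (a *: cross (L i) (L j)); rewrite na !incidentZ // !incidentE li lj eqxx.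
Qed.

Definition meet i j : 'rV[algC]_3 := xchoose (meet_exists i j).

Lemma meetP i j : i != j ->
  [/\ normalized (meet i j), incident (L i) (meet i j) & incident (L j) (meet i j)].
Proof.
move=> /cross_lines_neq0 c_neq0.
by move: (xchooseP (meet_exists i j)) => /implyP/(_ c_neq0)/and3P.
Qed.

Lemma meet_eq i j v : i != j -> normalized v ->
  incident (L i) v -> incident (L j) v -> v = meet i j.
Proof.
move=> ij nv iv jv; have [nw iw jw] := meetP ij.
have [a va] := common_point_scale iv jv (cross_lines_neq0 ij).
have [b wb] := common_point_scale iw jw (cross_lines_neq0 ij).
have b_neq0 : b != 0.
  by apply: contra_neq (normalized_neq0 nw) => b0; rewrite wb b0 scale0r.
by apply: (normalized_scale (c := a / b)) => //; rewrite va wb scalerA divfK.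
Qed.

Lemma meetC i j : i != j -> meet i j = meet j i.
Proof. by move=> ij; have [nv iv jv] := meetP ij; apply: meet_eq; rewrite // eq_sym. Qed.

Lemma incident_meet h g k : h != g -> h != k ->
  incident (L k) (meet h g) = (meet h g == meet h k).
Proof.
move=> hg hk; have [ng hg' _] := meetP hg; have [_ _ kk] := meetP hk.
by apply/idP/eqP => [kg|->//]; apply: meet_eq.
Qed.

Lemma meet_intersection h k : h != k -> intersection_point L (meet h k).
Proof.
move=> hk; have [nv hv kv] := meetP hk.
rewrite /intersection_point normalized_neq0 //= /mult.
apply: leq_trans (_ : #|[set h; k]| <= _)%N; first by rewrite cards2 hk.
by apply: subset_leq_card; apply/subsetP => j; rewrite !inE => /orP[]/eqP->.
Qed.

Lemma mult_split (A : {set 'I_n}) v :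
  mult L v = (#|lines_through L v :&: A| + #|lines_through L v :\: A|)%N.
Proof. by rewrite cardsID. Qed.

Definition balanced (A : {set 'I_n}) : Prop :=
  forall h k, h \in A -> k \notin A ->
  #|lines_through L (meet h k) :&: A| = 2%N /\ #|lines_through L (meet h k) :\: A| = 2%N.

Lemma balancedC (A : {set 'I_n}) : balanced A -> balanced (~: A).
Proof.
move=> balA h k; rewrite !inE negbK => hA kA.
have kh : k != h by apply: contraNneq hA => <-.
by rewrite -meetC // setDE setCK -setDE; case: (balA k h kA hA) => -> ->.
Qed.

Definition partners (A : {set 'I_n}) h :=
  [set g in A :\ h | lines_through L (meet h g) :\: A != set0].

Lemma partnersP (A : {set 'I_n}) h g : h \in A -> g \in partners A h ->
  [/\ g \in A, h != g & exists2 k, k \notin A & meet h g = meet h k].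
Proof.
move=> hA; rewrite !inE => /andP[/andP[gh gA] /set0Pn[k]].
rewrite !inE => /andP[kA kv]; have hg : h != g by rewrite eq_sym.
have hk : h != k by apply: contraNneq kA => <-.
by split=> //; exists k => //; apply/eqP; rewrite -(incident_meet hg hk).
Qed.

(* Double counting pairs (g, k), g a line of A other than h and k a line
   outside A through the meet of h and g: each k lies in exactly one pair,
   each partner g in exactly two and every other g in none. *)
Lemma partners_count (A : {set 'I_n}) h : balanced A -> h \in A ->
  #|~: A| = (2 * #|partners A h|)%N.
Proof.
move=> balA hA.
have through_meet g k : (g \in A :\ h) -> k \notin A ->
    incident (L k) (meet h g) = (g \in lines_through L (meet h k)).
  rewrite !inE => /andP[gh _] kA; have hg : h != g by rewrite eq_sym.
  have hk : h != k by apply: contraNneq kA => <-.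
  by rewrite (incident_meet hg hk) (incident_meet hk hg) eq_sym.
have one_partner k : k \in ~: A ->
    #|[set g in A :\ h | incident (L k) (meet h g)]| = 1%N.
  rewrite inE => kA; have hk : h != k by apply: contraNneq kA => <-.
  have [_ hv _] := meetP hk; have [+ _] := balA h k hA kA.
  rewrite (cardsD1 h) !inE hA hv => -[] <-; apply: eq_card => g.
  rewrite [in LHS]inE; have [gAh|] /= := boolP (g \in A :\ h).
    by rewrite through_meet //; move: gAh; rewrite !inE => /andP[-> ->]; rewrite andbT.
  by rewrite !inE negb_and => /orP[]/negPf->; rewrite ?andbF.
have two_lines g : g \in A :\ h ->
    #|[set k in ~: A | incident (L k) (meet h g)]| = (2 * (g \in partners A h))%N.
  move=> gA; have hg : h != g by move: gA; rewrite !inE eq_sym => /andP[].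
  have -> : [set k in ~: A | incident (L k) (meet h g)] = lines_through L (meet h g) :\: A.
    by apply/setP => k; rewrite !inE andbC.
  rewrite inE gA /=; have [->|nonempty] := eqVneq (lines_through L (meet h g) :\: A) set0.
    by rewrite cards0.
  case/set0Pn: nonempty => k; rewrite !inE => /andP[kA kg].
  have hk : h != k by apply: contraNneq kA => <-.
  have -> : meet h g = meet h k by apply/eqP; rewrite -(incident_meet hg hk).
  by rewrite (balA h k hA kA).2.
rewrite -sum1_card (eq_bigr _ (fun k kA => esym (one_partner k kA))) double_count.
rewrite (eq_bigr _ two_lines) -big_distrr /= sum_bool_card; congr (2 * _)%N.
by apply: eq_card => g; rewrite [in LHS]inE andb_idl // inE => /andP[].
Qed.

Lemma partners_lt (A : {set 'I_n}) h : h \in A -> (#|partners A h| < #|A|)%N.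
Proof.
move=> hA; rewrite (cardsD1 h A) hA add1n ltnS; apply: subset_leq_card.
by apply/subsetP => g; rewrite !inE => /andP[/andP[-> ->]].
Qed.

Lemma partner_quadruple (A : {set 'I_n}) h g : balanced A -> h \in A ->
  g \in partners A h -> mult L (meet h g) = 4%N.
Proof.
move=> balA hA /(partnersP hA)[_ _ [k kA ->]].
by rewrite (mult_split A); case: (balA h k hA kA) => -> ->.
Qed.

(* Distinct partners give distinct points, since a mixed point carries
   only two lines of each colour. *)
Lemma partner_meet_inj (A : {set 'I_n}) h : balanced A -> h \in A ->
  {in partners A h &, injective (meet h)}.
Proof.
move=> balA hA g1 g2 /(partnersP hA)[g1A hg1 [k kA e1]] /(partnersP hA)[g2A hg2 _] e12.
apply/eqP; apply: contraT => g12.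
have [+ _] := balA h k hA kA; rewrite -e1 => two.
have [_ hv g1v] := meetP hg1; have [_ _ g2v] := meetP hg2.
have : (#|h |: [set g1; g2]| <= 2)%N.
  rewrite -two; apply: subset_leq_card; apply/subsetP => j.
  by rewrite !inE => /orP[|/orP[]]/eqP->; rewrite ?hA ?g1A ?g2A ?hv ?g1v ?e12 ?g2v.
by rewrite cardsU1 cards2 g12 !inE negb_or hg1 hg2.
Qed.

Lemma mixed_point_partner (A : {set 'I_n}) h k v : balanced A -> h \in A -> k \notin A ->
  normalized v -> incident (L h) v -> incident (L k) v ->
  exists2 g, g \in partners A h & v = meet h g.
Proof.
move=> balA hA kA nv hv kv; have hk : h != k by apply: contraNneq kA => <-.
have vE := meet_eq hk nv hv kv.
have [+ _] := balA h k hA kA; rewrite -vE (cardsD1 h) !inE hA hv add1n => -[] one.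
have /card_gt0P[g] : (0 < #|lines_through L v :&: A :\ h|)%N by rewrite one.
rewrite !inE => /and3P[gh gv gA]; have hg : h != g by rewrite eq_sym.
have vg := meet_eq hg nv hv gv.
by exists g => //; rewrite !inE gh gA -vg; apply/set0Pn; exists k; rewrite !inE kA.
Qed.

(* A quadruple point on h all of whose lines have the colour of h uses three
   further lines of that colour, none of them a partner of h. *)
Lemma pure_quadruple_bound (A : {set 'I_n}) h v : h \in A -> normalized v ->
  incident (L h) v -> mult L v = 4%N -> lines_through L v \subset A ->
  (#|partners A h| + 4 <= #|A|)%N.
Proof.
move=> hA nv hv v4 vA.
have others : #|lines_through L v :\ h| = 3%N.
  by move: v4; rewrite /mult (cardsD1 h) inE hv add1n => -[].
have disjoint_sides : [disjoint lines_through L v :\ h & partners A h].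
  rewrite -setI_eq0; apply/eqP/setP => g; rewrite !inE.
  apply/negP => /andP[/andP[gh gv] /andP[_]]; have hg : h != g by rewrite eq_sym.
  by rewrite -(meet_eq hg nv hv gv) setD_eq0 vA.
have sub : (lines_through L v :\ h) :|: partners A h \subset A :\ h.
  rewrite subUset setSD //=; apply/subsetP => g; rewrite inE => /andP[].
  by rewrite inE.
move: (subset_leq_card sub); rewrite cardsU (disjoint_setI0 disjoint_sides) cards0 subn0.
by rewrite others (cardsD1 h A) hA; lia.
Qed.

Lemma quadruple_points_on_line (A : {set 'I_n}) h : balanced A -> h \in A ->
  (#|A| < #|partners A h| + 4)%N ->
  exists s : seq 'rV[algC]_3,
    [/\ uniq s, all normalized s, size s = #|partners A h| &
        forall v, normalized v ->
          (v \in s <-> incident (L h) v && (mult L v == 4)%N)].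
Proof.
move=> balA hA small_A; exists [seq meet h g | g <- enum (partners A h)]; split.
- rewrite map_inj_in_uniq ?enum_uniq // => g1 g2; rewrite !mem_enum.
  exact: partner_meet_inj.
- by apply/allP => _ /mapP[g /[!mem_enum] /(partnersP hA)[_ hg _] ->]; case: (meetP hg).
- by rewrite size_map -cardE.
move=> v nv; split.
  case/mapP=> g /[!mem_enum] gP ->; have [_ hg _] := partnersP hA gP.
  by have [_ -> _] := meetP hg; rewrite (partner_quadruple balA hA gP).
case/andP=> hv /eqP v4; apply/mapP.
have [vA|/subsetPn[k kv kA]] := boolP (lines_through L v \subset A).
  by move: small_A; rewrite ltnNge (pure_quadruple_bound hA nv hv v4 vA).
rewrite inE in kv; have [g gP ->] := mixed_point_partner balA hA kA nv hv kv.
by exists g; rewrite ?mem_enum.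
Qed.

Lemma solution_balanced (eta : 'I_n -> 'F_2) : solves_S L eta ->
  (forall v, intersection_point L v -> (mult L v <= 5)%N) ->
  balanced [set j | eta j == 0].
Proof.
set A := [set j | eta j == 0] => solS bounded h k; rewrite !inE => /eqP eta_h eta_k.
have hk : h != k by apply: contraNneq eta_k => <-; rewrite eta_h.
have [_ hv kv] := meetP hk; have ip := meet_intersection hk.
set v := meet h k in hv kv ip *.
have m_even : (2 %| mult L v)%N.
  move: (solS v ip); case: ifP => // _ /(_ h k); rewrite !inE hv kv => /(_ isT isT) e.
  by move: eta_k; rewrite -e eta_h eqxx.
have B_even : (2 %| #|lines_through L v :\: A|)%N.
  move: (solS v ip); rewrite m_even F2_sum (dvdn_pcharf (pchar_Fp (isT : prime 2))) => <-.
  by apply/eqP; congr (_%:R); apply: eq_card => j; rewrite !inE andbC.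
have A_pos : (0 < #|lines_through L v :&: A|)%N.
  by apply/card_gt0P; exists h; rewrite !inE hv eta_h eqxx.
have B_pos : (0 < #|lines_through L v :\: A|)%N.
  by apply/card_gt0P; exists k; rewrite !inE kv eta_k.
by move: (bounded v ip) m_even; rewrite (mult_split A); lia.
Qed.

End Arrangement.

Lemma nonconstant_F2 n (eta : 'I_n -> 'F_2) : nonconstant eta ->
  exists a b, eta a = 0 /\ eta b != 0.
Proof.
case=> h [k hk]; have [h0|/F2_neq0 h1] := eqVneq (eta h) 0.
  by exists h, k; split=> //; rewrite -h0 eq_sym; apply/eqP.
have [k0|/F2_neq0 k1] := eqVneq (eta k) 0; last by rewrite h1 k1 in hk.
by exists k, h; rewrite h1 oner_neq0.
Qed.

Section TwelveLines.
Variable L : 'I_12 -> 'rV[algC]_3.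
Hypothesis hL : line_arrangement L.

(* By partners_count and partners_lt, |B| = 2p < 2|A| and |A| = 2q < 2|B|,
   which for |A| + |B| = 12 only allows |A| = |B| = 6. *)
Lemma colour_classes_halves (A : {set 'I_12}) a b :
  balanced L A -> a \in A -> b \notin A ->
  #|A| = 6%N /\ #|~: A| = 6%N.
Proof.
move=> balA aA bA; have bA' : b \in ~: A by rewrite inE.
have count_A := partners_count hL balA aA.
have count_B := partners_count hL (balancedC hL balA) bA'; rewrite setCK in count_B.
have lt_A := partners_lt L aA; have lt_B := partners_lt L bA'.
by have := cardsC A; rewrite card_ord; lia.
Qed.

(* With two classes of six lines, each line has 3 partners, hence exactly
   three quadruple points. *)
Lemma three_quadruple_points (A : {set 'I_12}) h : balanced L A ->
  #|A| = 6%N -> #|~: A| = 6%N -> h \in A ->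
  exists s : seq 'rV[algC]_3,
    [/\ uniq s, all normalized s, size s = 3%N &
        forall v, normalized v ->
          (v \in s <-> incident (L h) v && (mult L v == 4)%N)].
Proof.
move=> balA cA cB hA; have := partners_count hL balA hA; rewrite cB => count_h.
have [|s [? ? size_s ?]] := quadruple_points_on_line hL balA hA; first by rewrite cA; lia.
by exists s; split=> //; rewrite size_s; lia.
Qed.

End TwelveLines.

Theorem lemma3p5 (L : 'I_12 -> 'rV[algC]_3) :
  line_arrangement L ->
  (forall v, intersection_point L v -> (mult L v <= 5)%N) ->
  (exists eta : 'I_12 -> 'F_2, solves_S L eta /\ nonconstant eta) ->
  forall i : 'I_12, exists s : seq 'rV[algC]_3,
    [/\ uniq s, all normalized s, size s = 3%N &
        forall v, normalized v ->
          (v \in s <-> incident (L i) v && (mult L v == 4)%N)].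
Proof.
move=> hL bounded [eta [solS /nonconstant_F2[a [b [eta_a eta_b]]]]] i.
set A := [set j | eta j == 0].
have balA : balanced L A := solution_balanced hL solS bounded.
have aA : a \in A by rewrite inE eta_a.
have bA : b \notin A by rewrite inE.
have [cA cB] := colour_classes_halves hL balA aA bA.
have [iA|iB] := boolP (i \in A); first exact: (three_quadruple_points hL balA cA cB iA).
have cB' : #|~: ~: A| = 6%N by rewrite setCK.
have iB' : i \in ~: A by rewrite inE.
exact: (three_quadruple_points hL (balancedC hL balA) cB cB' iB').
Qed.
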